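(* Let $\mathcal A\subseteq\mathrm{Mat}(\mathbb{Z}^D,p)$ be a VS $*$-subalgebra with range $\ell$, and let $S\subseteq\mathbb{Z}^D$ be any set of sites. Then every central element $z$ of $\mathcal A\cap\mathrm{Mat}(S,p)$ is supported on $(\mathbb{Z}^D\setminus S)^{+2\ell}\cap S$.
   Context: For $p:\mathbb{Z}^D\to\mathbb{Z}_{>0}$ and finite $F$, $\mathrm{Mat}(F,p)=\bigotimes_{s\in F}M_{p(s)}(\mathbb{C})$ with embeddings by tensoring identities; $\mathrm{Mat}(\mathbb{Z}^D,p)$ is the union, and for arbitrary $S$, $\mathrm{Mat}(S,p)$ is the union of $\mathrm{Mat}(F,p)$ over finite $F\subseteq S$. $\mathrm{Supp}(x)$ is the smallest finite set $F$ with $x\in\mathrm{Mat}(F,p)$ (empty for scalars); ''supported on $T$'' means $\mathrm{Supp}(x)\subseteq T$. $T^{+\ell}$ is the set of sites at $\ell_\infty$-distance at most $\ell$ from $T$. A $*$-subalgebra $\mathcal A$ is VS with range $\ell>0$ if for every $a\in\mathcal A\setminus\mathbb{C}\mathbf 1$ and every $s\in\mathrm{Supp}(a)$ there is $w\in\mathcal A\cap\mathrm{Mat}(\{s\}^{+\ell},p)$ with $[a,w]\ne0$. *)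

From mathcomp Require Import all_boot all_order all_algebra.
From mathcomp Require Import all_classical all_reals.
From mathcomp Require Import Rstruct complex.

Set Implicit Arguments.
Unset Strict Implicit.
Unset Printing Implicit Defensive.
Import Order.TTheory GRing.Theory Num.Theory.
Local Open Scope classical_set_scope.
Local Open Scope ring_scope.

Notation Cplx := (Rdefinitions.R[i]).

Definition site (D : nat) := 'rV[int]_D.

Definition dist_inf (D : nat) (s t : site D) : nat :=
  (\max_(i < D) `|s ord0 i - t ord0 i|%N)%N.

Definition thicken (D : nat) (T : set (site D)) (l : nat) : set (site D) :=
  [set s | exists2 t, T t & (dist_inf s t <= l)%N].

(* Model of the infinite tensor product Mat(Z^D,p):
   a configuration assigns a level to every site; it is valid for p if
   sigma s < p s everywhere.  An element of the algebra is a kernel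
   (matrix) indexed by configurations; the element a of Mat(F,p)
   (F finite) is represented by the kernel a (x) 1_{F^c}, i.e.
   (sigma,tau) |-> a(sigma|F, tau|F) if sigma, tau are valid and agree
   off F, and 0 otherwise.  This gives injective *-homomorphisms
   Mat(F,p) -> kernels compatible with the embeddings "tensor with identity". *)
Definition conf (D : nat) := site D -> nat.
Definition kern (D : nat) := conf D -> conf D -> Cplx.

Definition valid (D : nat) (p : site D -> nat) (sg : conf D) : Prop :=
  forall s, (sg s < p s)%N.

Definition agree_off (D : nat) (F : set (site D)) (sg tau : conf D) : Prop :=
  forall s, ~ F s -> sg s = tau s.

Definition agree_on (D : nat) (F : set (site D)) (sg tau : conf D) : Prop :=
  forall s, F s -> sg s = tau s.

(* x is of the form a (x) 1_{F^c} for some matrix a on the sites of F. *)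
Definition local_on (D : nat) (p : site D -> nat) (F : set (site D))
    (x : kern D) : Prop :=
  (forall sg tau, x sg tau != 0 ->
     [/\ valid p sg, valid p tau & agree_off F sg tau]) /\
  (forall sg tau sg' tau',
     valid p sg -> valid p tau -> valid p sg' -> valid p tau' ->
     agree_off F sg tau -> agree_off F sg' tau' ->
     agree_on F sg sg' -> agree_on F tau tau' ->
     x sg tau = x sg' tau').

Definition Mat (D : nat) (p : site D -> nat) (S : set (site D)) : set (kern D) :=
  [set x | exists F : set (site D), [/\ finite_set F, F `<=` S & local_on p F x]].

Definition Supp (D : nat) (p : site D -> nat) (x : kern D) : set (site D) :=
  [set s | forall F : set (site D), finite_set F -> local_on p F x -> F s].

Definition zerok (D : nat) : kern D := fun _ _ => 0.
Definition idk (D : nat) (p : site D -> nat) : kern D :=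
  fun sg tau => if `[< valid p sg /\ sg = tau >] then 1 else 0.
Definition addk (D : nat) (x y : kern D) : kern D := fun sg tau => x sg tau + y sg tau.
Definition scalek (D : nat) (c : Cplx) (x : kern D) : kern D := fun sg tau => c * x sg tau.
(* matrix product: sum over intermediate configurations (finitely many
   nonzero terms for local kernels) *)
Definition mulk (D : nat) (x y : kern D) : kern D :=
  fun sg tau => \sum_(rho \in [set: conf D]) x sg rho * y rho tau.
Definition adjk (D : nat) (x : kern D) : kern D := fun sg tau => (x tau sg)^*.

Definition star_subalgebra (D : nat) (p : site D -> nat) (A : set (kern D)) : Prop :=
  [/\ A `<=` Mat p setT, A (@zerok D),
      (forall x y, A x -> A y -> A (addk x y)) &
      [/\ 
      (forall c x, A x -> A (scalek c x)),
      (forall x y, A x -> A y -> A (mulk x y)) &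
      (forall x, A x -> A (adjk x))]].

Definition VS (D : nat) (p : site D -> nat) (l : nat) (A : set (kern D)) : Prop :=
  (0 < l)%N /\
  forall a, A a -> ~ (exists c : Cplx, a = scalek c (idk p)) ->
  forall s, Supp p a s ->
  exists w, [/\ A w, Mat p (thicken [set s] l) w & mulk a w <> mulk w a].

(* If [s] lies in the support of [z] but [{s}^{+l}] is contained in [S], then
   the element [w] that the VS property provides at [s] lies in
   [A ∩ Mat(S,p)] and does not commute with [z], so [z] is not central there.
   Hence every support site of a central [z] is within distance [l] (a fortiori
   [2 l]) of the complement of [S]. *)

From mathcomp Require Import all_boot all_order all_algebra.
From mathcomp Require Import all_classical all_reals.
From mathcomp Require Import Rstruct complex.
Local Open Scope classical_set_scope.
Local Open Scope ring_scope.
Import GRing.Theory Num.Theory.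

Set Implicit Arguments.
Unset Strict Implicit.
Unset Printing Implicit Defensive.

Section Geometry.

Variable D : nat.

Lemma dist_inf_sym (s t : site D) : dist_inf s t = dist_inf t s.
Proof. by apply: eq_bigr => i _; rewrite -opprB abszN. Qed.

Lemma thicken_le (T : set (site D)) (l l' : nat) :
  (l <= l')%N -> thicken T l `<=` thicken T l'.
Proof. by move=> ll' s [t Tt dst]; exists t => //; apply: leq_trans ll'. Qed.

Lemma thicken_set1_subset (S : set (site D)) (l : nat) (s : site D) :
  ~ thicken (~` S) l s -> thicken [set s] l `<=` S.
Proof.
move=> farS t [_ -> dts]; apply: contrapT => nSt.
by apply: farS; exists t; rewrite // dist_inf_sym.
Qed.

End Geometry.

Section Support.

Variables (D : nat) (p : site D -> nat).

Lemma Mat_subset (S T : set (site D)) : S `<=` T -> Mat p S `<=` Mat p T.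
Proof. by move=> ST x [F [finF FS locF]]; exists F; split=> //; apply: subset_trans ST. Qed.

Lemma Supp_subset_Mat (S : set (site D)) (x : kern D) :
  Mat p S x -> Supp p x `<=` S.
Proof. by move=> [F [finF FS locF]] s /(_ F finF locF); apply: FS. Qed.

Lemma local_on_scalar (c : Cplx) : local_on p set0 (scalek c (idk p)).
Proof.
have agree_off0 (sg tau : conf D) : agree_off set0 sg tau -> sg = tau.
  by move=> h; apply: boolp.funext => s; apply: h.
rewrite /scalek /idk; split.
- move=> sg tau; case: asboolP => [[vs <-] _|]; last by rewrite mulr0 eqxx.
  by split=> // s.
- move=> sg tau sg' tau' vs vt vs' vt' /agree_off0 <- /agree_off0 <- _ _.
  by do 2![case: asboolP => [_|[]] //].
Qed.

Lemma Supp_scalar (c : Cplx) : Supp p (scalek c (idk p)) = set0.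
Proof.
by apply/seteqP; split=> // s /(_ set0 (@finite_set0 _) (local_on_scalar c)).
Qed.

Lemma VS_Supp_noncommuting (l : nat) (A : set (kern D)) (z : kern D)
    (s : site D) :
  VS p l A -> A z -> Supp p z s ->
  exists w, [/\ A w, Mat p (thicken [set s] l) w & mulk z w <> mulk w z].
Proof.
move=> [_ VSA] Az Supp_zs; apply: VSA => // -[c zE].
by move: Supp_zs; rewrite zE Supp_scalar.
Qed.

End Support.

Theorem lemma2p3 (D : nat) (p : site D -> nat) (hp : forall s, (0 < p s)%N)
    (A : set (kern D)) (l : nat) :
  star_subalgebra p A -> VS p l A ->
  forall (S : set (site D)) (z : kern D),
    A z -> Mat p S z ->
    (forall y, A y -> Mat p S y -> mulk z y = mulk y z) ->
    Supp p z `<=` thicken (~` S) (2 * l) `&` S.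
Proof.
move=> _ VSA S z Az MatSz central s Supp_zs.
split; last exact: Supp_subset_Mat MatSz _ Supp_zs.
apply: (@thicken_le _ _ l); first by rewrite mul2n -addnn leq_addr.
apply: contrapT => farS.
have [w [Aw Matw noncomm]] := VS_Supp_noncommuting VSA Az Supp_zs.
apply: noncomm; apply: central => //.
exact: Mat_subset (thicken_set1_subset farS) _ Matw.
Qed.
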